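(* Let $A$ be a complex $m\times m$ matrix, $1\le k\le m$, $\mathbf z=(z_1,\dots,z_k)\in[m]^k$ with multiplicities $s_\nu=|\{i:z_i=\nu\}|$, and let $B$ be the $k\times k$ matrix whose $i$-th row is row $z_i$ of the first $k$ columns of $A$. For $\ell\in[k]$ let $B^{\diamond}_{k,\ell}$ be the $(k-1)\times(k-1)$ submatrix of $B$ obtained by deleting row $k$ and column $\ell$. Then the whole collection $\{\mathrm{Per}\,B^{\diamond}_{k,\ell}:\ell\in[k]\}$ can be computed jointly using $O\!\left(k\prod_{\nu=1}^m(s_\nu+1)\right)$ arithmetic operations (the same bound as for computing $\mathrm{Per}\,B$) and $O(k)$ additional space beyond the input.
   Context: The permanent of a square matrix $(b_{ij})_{i,j\le k}$ is $\sum_\sigma\prod_i b_{i,\sigma(i)}$ over permutations $\sigma$ of $[k]$; $[m]=\{1,\dots,m\}$. Arithmetic operations on complex numbers are counted as unit cost. *)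

(* Complex numbers are modelled as R[i] = complex R for
   R : realType (the real numbers of MathComp-Analysis). *)
From HB Require Import structures.
From mathcomp Require Import all_boot all_order all_algebra all_fingroup.
From mathcomp Require Import complex.
From mathcomp Require Import reals.

Set Implicit Arguments.
Unset Strict Implicit.
Unset Printing Implicit Defensive.

Import Order.TTheory GRing.Theory Num.Theory.
Local Open Scope ring_scope.

Definition permanent (F : comNzRingType) (n : nat) (M : 'M[F]_n) : F :=
  \sum_(s : 'S_n) \prod_(i < n) M i (s i).

(* ---------- Algebraic straight-line programs (unit-cost arithmetic) -------
   A program over a field F reads the entries of an m x m input matrix
   (read-only), uses W work registers (the additional space), and consists
   of instructions  reg := a1 op a2  where op is +, -, *, / and each operand
   is an input entry, a work register, or a constant of F.  Each instruction
   is one arithmetic operation; the cost of a program is its length.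
   Division uses MathComp's total inverse (x / 0 = 0). *)

Inductive slp_op := SAdd | SSub | SMul | SDiv.

Inductive operand (F : Type) (m W : nat) :=
  | OIn of 'I_m & 'I_m
  | OReg of 'I_W
  | OConst of F.

Record instr (F : Type) (m W : nat) := Instr {
  i_dst : 'I_W;
  i_op : slp_op;
  i_arg1 : operand F m W;
  i_arg2 : operand F m W }.

Definition slp (F : Type) (m W : nat) := seq (instr F m W).

Section Semantics.
Variables (F : fieldType) (m W : nat).

Definition eval_operand (A : 'M[F]_m) (st : 'I_W -> F) (o : operand F m W) : F :=
  match o with
  | OIn i j => A i j
  | OReg r => st r
  | OConst c => c
  end.

Definition eval_op (o : slp_op) (x y : F) : F :=
  match o with
  | SAdd => x + y
  | SSub => x - y
  | SMul => x * y
  | SDiv => x / y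
  end.

Definition step (A : 'M[F]_m) (st : 'I_W -> F) (ins : instr F m W) : 'I_W -> F :=
  let v := eval_op (i_op ins) (eval_operand A st (i_arg1 ins))
                                 (eval_operand A st (i_arg2 ins)) in
  fun r => if r == i_dst ins then v else st r.

Definition run (P : slp F m W) (A : 'M[F]_m) : 'I_W -> F :=
  foldl (step A) (fun _ => 0) P.

End Semantics.

Definition Bmat (F : Type) (m k : nat) (hk : (k <= m)%N) (A : 'M[F]_m)
    (z : 'I_k -> 'I_m) : 'M[F]_k :=
  \matrix_(i < k, j < k) A (z i) (widen_ord hk j).

Definition Bdiamond (F : Type) (n : nat) (B : 'M[F]_n.+1) (l : 'I_n.+1)
    : 'M[F]_n :=
  \matrix_(i < n, j < n) B (widen_ord (leqnSn n) i) (lift l j).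

Definition mult (m k : nat) (z : 'I_k -> 'I_m) (nu : 'I_m) : nat :=
  #|[pred i | z i == nu]|.

From HB Require Import structures.
From mathcomp Require Import all_boot all_order all_algebra all_fingroup.
From mathcomp Require Import complex.
From mathcomp Require Import reals.
From mathcomp Require Import zify.
From Stdlib Require Import FunctionalExtensionality.
Set Implicit Arguments.
Unset Strict Implicit.
Unset Printing Implicit Defensive.
Import GRing.Theory Num.Theory.
Local Open Scope ring_scope.

(* Ryser-type evaluation of all the permanents Per B^diamond_{k,l} at once.

   Write K = n.+1 = k.  By Ryser's formula, Per M equals the alternating sum
   over subsets S of the rows of the product of the column sums of S.  For
   B^diamond_{k,l} the rows are r_0, ..., r_{n-1}, where r_i is row z_i of A
   restricted to the first K columns, and the product omits column l; so
   Per B^diamond_{k,l} = (D_{r_0} ... D_{r_{n-1}} phi_l)(0), where D_r is the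
   forward difference phi |-> phi(. + r) - phi and phi_l(c) = prod_{j<>l} c_j.
   The difference operators commute, so equal rows can be grouped: if row nu
   occurs s_nu times, D_{r_nu}^{s_nu} psi (c) = sum_t w(s_nu,t) psi(c + t r_nu)
   with signed binomial weights w.  The program runs nested loops over
   t_nu = 0..s_nu, keeping the current vector c in K registers and updating it
   by K additions per step; at every leaf it adds w * phi_l(c) to the output
   register of every l, computing all K products prod_{j<>l} c_j with O(K)
   operations by prefix products and a backward suffix sweep. *)

Definition sgnb (R : pzRingType) (b : bool) : R := if b then 1 else -1.
Arguments sgnb {R} b.

Lemma onto_injective (T : finType) (g : T -> T) :
  (forall y, y \in codom g) -> injective g.
Proof.
move=> onto; have /image_injP inj : #|image g T| == #|T|.
  by apply/eqP; apply: eq_card => y; rewrite [y \in image _ _]onto.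
by move=> x y; apply: inj.
Qed.

Section Ryser.
Variable R : comNzRingType.

(* Inclusion-exclusion: the signed count of the subsets x containing the
   image of g detects whether g is a bijection. *)
Lemma sign_sum_indicator n (g : {ffun 'I_n -> 'I_n}) :
  \sum_(x : {ffun 'I_n -> bool}) (\prod_i sgnb (x i)) * \prod_j ((x (g j))%:R : R)
  = (injectiveb g)%:R.
Proof.
transitivity (\sum_(x : {ffun 'I_n -> bool})
   \prod_i (sgnb (x i) * \prod_(j | g j == i) ((x i)%:R : R))).
  apply: eq_bigr => x _; rewrite big_split /=; congr (_ * _).
  rewrite (partition_big g xpredT) //=; apply: eq_bigr => i _.
  by apply: eq_bigr => j /eqP->.
rewrite -(bigA_distr_bigA (fun i b => sgnb b * \prod_(j | g j == i) (b%:R : R))) /=.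
have factorE i : \sum_(b : bool) sgnb b * \prod_(j | g j == i) (b%:R : R)
                 = (i \in codom g)%:R.
  rewrite big_bool /= mul1r big1_eq; case: (pickP (fun j => g j == i)) => [j /eqP gj|no].
    by rewrite (bigD1 j) ?gj //= mul0r mulr0 addr0 -gj codom_f.
  rewrite big_pred0 // mulr1 addrN; case: codomP => // -[j gj].
  by move: (no j); rewrite gj eqxx.
under eq_bigr do rewrite factorE.
have [/injectiveP inj | ninj] := boolP (injectiveb g).
  by apply: big1 => i _; rewrite inj_card_onto.
have [i /negbTE i_out] : exists i, i \notin codom g.
  apply/existsP; apply: contraR ninj => /existsPn onto; apply/injectiveP.
  by apply: onto_injective => i; have := onto i; rewrite negbK.
by rewrite (bigD1 i) //= i_out mul0r.
Qed.

Lemma permanent_injections n (M : 'M[R]_n) :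
  permanent M = \sum_(g : {ffun 'I_n -> 'I_n} | injectiveb g) \prod_j M (g j) j.
Proof.
rewrite (reindex (@pval _)) /=; last first.
  by exists (insubd (1%g : 'S_n)) => /= f inj_f; first apply: val_inj;
    apply: insubdK.
rewrite /permanent [LHS](reindex_inj (@invg_inj _)) /=.
apply: eq_big => [s | s _]; first by rewrite (valP s).
rewrite (reindex_inj (@perm_inj _ s)) /=; apply: eq_bigr => i _.
by rewrite pvalE permK.
Qed.

(* Ryser's formula, with the subset S given by its indicator x. *)
Theorem ryser n (M : 'M[R]_n) : permanent M =
  \sum_(x : {ffun 'I_n -> bool}) (\prod_i sgnb (x i)) *
      \prod_(j < n) \sum_(i < n) (x i)%:R * M i j.
Proof.
rewrite permanent_injections big_mkcond /=.
under [RHS]eq_bigr do rewrite bigA_distr_bigA mulr_sumr.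
rewrite exchange_big /=; apply: eq_bigr => g _.
under [RHS]eq_bigr do rewrite big_split /= mulrA.
by rewrite -mulr_suml sign_sum_indicator; case: injectiveb; rewrite ?mul1r ?mul0r.
Qed.
End Ryser.

Section Differences.
Variables (F : pzRingType) (V : zmodType).

Definition Delta (r : V) (phi : V -> F) : V -> F := fun c => phi (c + r) - phi c.

Definition Deltas (rs : seq V) (phi : V -> F) : V -> F := foldr Delta phi rs.

Definition ffun_cons n (b : bool) (y : {ffun 'I_n -> bool}) : {ffun 'I_n.+1 -> bool} :=
  [ffun i => if unlift ord0 i is Some j then y j else b].

Lemma sum_ffun_cons n (G : {ffun 'I_n.+1 -> bool} -> F) :
  \sum_x G x = \sum_(b : bool) \sum_(y : {ffun 'I_n -> bool}) G (ffun_cons b y).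
Proof.
rewrite pair_big /= (reindex (fun p => ffun_cons p.1 p.2)) //=.
exists (fun x => (x ord0, [ffun j => x (lift ord0 j)])) => [[b y] _ | x _] /=.
  congr (_, _); first by rewrite ffunE unlift_none.
  by apply/ffunP => j; rewrite !ffunE liftK.
by apply/ffunP => i; rewrite !ffunE; case: unliftP => [j ->|->]; rewrite ?ffunE.
Qed.

(* Expanding a composite difference gives a signed sum over subsets; this is
   the shape of Ryser's formula. *)
Lemma Deltas_expand n (v : 'I_n -> V) phi c : Deltas (map v (enum 'I_n)) phi c =
  \sum_(x : {ffun 'I_n -> bool}) (\prod_i sgnb (x i)) * phi (c + \sum_i v i *+ x i).
Proof.
elim: n v phi c => [|n IH] v phi c.
  rewrite enum_ord0 (big_pred1 [ffun i => false]) /=; last first.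
    by move=> x; symmetry; apply/eqP/ffunP => -[].
  by rewrite !big_ord0 mul1r addr0.
rewrite enum_ordSl /= -map_comp /Delta !IH sum_ffun_cons big_bool /= -sumrN.
congr (_ + _); apply: eq_bigr => y _.
  rewrite big_ord_recl [X in _ * phi (c + X)]big_ord_recl !ffunE unlift_none /= mul1r.
  congr (_ * phi _); first by apply: eq_bigr => i _; rewrite ffunE liftK.
  by rewrite addrA; congr (_ + _); apply: eq_bigr => i _; rewrite ffunE liftK.
rewrite big_ord_recl [X in _ = _ * phi (c + X)]big_ord_recl !ffunE unlift_none /=.
rewrite mulr0n add0r mulN1r mulNr; congr (- (_ * phi _)).
  by apply: eq_bigr => i _; rewrite ffunE liftK.
by congr (_ + _); apply: eq_bigr => i _; rewrite ffunE liftK.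
Qed.

(* Differences commute, so repeated directions can be grouped. *)
Lemma Delta_comm r1 r2 phi : Delta r1 (Delta r2 phi) = Delta r2 (Delta r1 phi).
Proof.
apply: functional_extensionality => c; rewrite /Delta (addrAC c r2 r1).
by rewrite !opprB !addrA -!(addrAC _ (- phi (c + r1))) -!(addrAC _ (- phi (c + r2))).
Qed.

Lemma Delta_iter_comm r1 r2 k phi :
  Delta r1 (iter k (Delta r2) phi) = iter k (Delta r2) (Delta r1 phi).
Proof. by elim: k => //= k IH; rewrite Delta_comm IH. Qed.

(* The signed binomial weights w(s,t) = (-1)^(s-t) C(s,t), defined by
   Pascal's recurrence, which is what the expansion of D_r^s uses. *)
Fixpoint wgt (s t : nat) : F :=
  match s with
  | 0 => (t == 0)%:R
  | s'.+1 => (if t is t'.+1 then wgt s' t' else 0) - wgt s' t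
  end.

Lemma wgt_out s t : (s < t)%N -> wgt s t = 0.
Proof. by elim: s t => [|s IH] [|t] //= lt_st; rewrite !IH ?subrr // ltnW. Qed.

Lemma iter_Delta_expand r s phi c :
  iter s (Delta r) phi c = \sum_(t < s.+1) wgt s t * phi (c + r *+ t).
Proof.
elim: s c => [|s IH] c; first by rewrite big_ord1 /= mulr0n addr0 mul1r.
rewrite iterS {1}/Delta !IH.
under [RHS]eq_bigr => t _ do rewrite /= mulrBl.
rewrite sumrB; congr (_ - _).
  rewrite [RHS]big_ord_recl /= mul0r add0r; apply: eq_bigr => t _.
  by rewrite /bump /= add1n mulrS addrA.
by rewrite [RHS]big_ord_recr /= wgt_out // mul0r addr0.
Qed.
End Differences.

Section Regroup.
Variables (F : pzRingType) (V : zmodType) (I : eqType) (rowv : I -> V).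

Definition grouped_Deltas (ls zs : seq I) (phi : V -> F) : V -> F :=
  foldr (fun nu psi => iter (count_mem nu zs) (Delta (rowv nu)) psi) phi ls.

Lemma grouped_Deltas_count ls zs1 zs2 phi :
  {in ls, forall nu, count_mem nu zs1 = count_mem nu zs2} ->
  grouped_Deltas ls zs1 phi = grouped_Deltas ls zs2 phi.
Proof.
elim: ls => //= a ls IH same; rewrite same ?mem_head // IH // => nu ls_nu.
by apply: same; rewrite in_cons ls_nu orbT.
Qed.

Lemma grouped_Deltas_cons ls zs a phi : uniq ls -> a \in ls ->
  Delta (rowv a) (grouped_Deltas ls zs phi) = grouped_Deltas ls (a :: zs) phi.
Proof.
elim: ls => //= b ls IH /andP [b_notin uniq_ls]; rewrite in_cons.
have [-> _ | ne_ab /= ls_a] := eqVneq a b; last first.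
  by rewrite Delta_iter_comm IH // (negbTE ne_ab).
rewrite add1n; congr (Delta _ (iter _ _ _)).
apply: grouped_Deltas_count => nu ls_nu /=.
by have -> : (b == nu) = false by apply: contraNF b_notin => /eqP ->.
Qed.

Lemma Deltas_regroup ls zs phi : uniq ls -> {subset zs <= ls} ->
  Deltas (map rowv zs) phi = grouped_Deltas ls zs phi.
Proof.
move=> uniq_ls; elim: zs => [|a zs IH] sub /=.
  by elim: ls {uniq_ls sub} => //= a ls ->.
rewrite IH ?grouped_Deltas_cons ?sub ?mem_head // => x zs_x.
by apply: sub; rewrite in_cons zs_x orbT.
Qed.
End Regroup.

Lemma prod_lift_split (R : pzSemiRingType) n (f : nat -> R) (l : 'I_n.+1) :
  \prod_(j < n) f (lift l j) = \prod_(i < l) f i * \prod_(l.+1 <= i < n.+1) f i.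
Proof.
rewrite -(big_mkord xpredT (fun j => f (bump l j))) (big_cat_nat _ (n := l)) //=;
  last by rewrite -ltnS.
congr (_ * _).
  rewrite big_mkord; apply: eq_bigr => i _.
  by rewrite /bump leqNgt ltn_ord.
have shift (L N : nat) :
    \prod_(L <= i < N) f (bump L i) = \prod_(L.+1 <= i < N.+1) f i.
  rewrite -[L.+1]addn1 -[N.+1]addn1 big_addn addnK.
  by apply: eq_big_nat => i /andP [le_Li _]; rewrite /bump le_Li addn1 add1n.
exact: shift.
Qed.

Section Program.
Variables (F : fieldType) (m n : nat) (hk : (n.+1 <= m)%N) (z : 'I_n.+1 -> 'I_m).
Local Notation K := n.+1.

(* Register layout: reg l (l < K) collects the output for column l;
   reg (K + j) holds coordinate j of the current vector c; reg (2K + j) holds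
   the prefix product c_0 ... c_{j-1}; reg 3K holds the weighted suffix
   product during a sweep and reg (3K + 1) is scratch. *)
Definition nregs := (3 * K + 2)%N.
Definition reg (i : nat) : 'I_nregs := inord i.
Arguments reg i%_N.
Local Notation ins := (instr F m nregs).
Local Notation oR r := (@OReg F m nregs r).
Local Notation oI a b := (@OIn F m nregs a b).
Local Notation oC c := (@OConst F m nregs c).

(* The row indices z_0, ..., z_{n-1} of B^diamond, and their multiplicities. *)
Definition zs := [seq z (widen_ord (leqnSn n) i) | i <- enum 'I_n].
Definition cnt nu := count_mem nu zs.

Lemma cnt_le_mult nu : (cnt nu <= mult z nu)%N.
Proof.
rewrite /cnt /mult cardE size_filter -enumT enum_ordSr -cats1 count_cat count_map.
apply: leq_trans (leq_addr _ _); rewrite [X in (_ <= X)%N]count_map.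
by apply: eq_leq; apply: eq_in_count => i _ /=; rewrite !inE eq_sym.
Qed.

Definition row_update (o : slp_op) (nu : 'I_m) : seq ins :=
  [seq Instr (reg (K + j)) o (oR (reg (K + j))) (oI nu (widen_ord hk j))
  | j : 'I_K <- enum 'I_K].

Fixpoint prefix_prog j : seq ins :=
  match j with
  | 0 => [:: Instr (reg (2 * K)) SAdd (oC 1) (oC 0)]
  | j'.+1 => rcons (prefix_prog j')
      (Instr (reg (2 * K + j'.+1)) SMul (oR (reg (2 * K + j'))) (oR (reg (K + j'))))
  end.

Definition sweep_step j : seq ins :=
  [:: Instr (reg (3 * K + 1)) SMul (oR (reg (2 * K + j))) (oR (reg (3 * K)));
      Instr (reg j) SAdd (oR (reg j)) (oR (reg (3 * K + 1)));
      Instr (reg (3 * K)) SMul (oR (reg (3 * K))) (oR (reg (K + j)))].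

Fixpoint suffix_sweep j : seq ins :=
  if j is j'.+1 then sweep_step j' ++ suffix_sweep j' else [::].

Definition leaf_prog (wt : F) : seq ins :=
  prefix_prog n ++ Instr (reg (3 * K)) SAdd (oC wt) (oC 0) :: suffix_sweep K.

Fixpoint loop_prog (body : nat -> seq ins) (advance : seq ins) (t c : nat) : seq ins :=
  match c with
  | 0 => body t
  | c'.+1 => body t ++ advance ++ loop_prog body advance t.+1 c'
  end.

Fixpoint prog (ls : seq 'I_m) (wt : F) : seq ins :=
  match ls with
  | [::] => leaf_prog wt
  | nu :: ls' =>
      loop_prog (fun t => prog ls' (wt * wgt F (cnt nu) t)) (row_update SAdd nu) 0 (cnt nu)
      ++ flatten (nseq (cnt nu) (row_update SSub nu))
  end.

Fixpoint prog_cost (ls : seq 'I_m) : nat :=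
  match ls with
  | [::] => 4 * K + 1
  | nu :: ls' => (cnt nu).+1 * prog_cost ls' + 2 * cnt nu * K
  end%N.

Lemma size_row_update o nu : size (row_update o nu) = K.
Proof. by rewrite size_map size_enum_ord. Qed.

Lemma size_leaf_prog wt : size (leaf_prog wt) = (4 * K + 1)%N.
Proof.
have size_prefix j : size (prefix_prog j) = j.+1.
  by elim: j => //= j IH; rewrite size_rcons IH.
have size_sweep j : size (suffix_sweep j) = (3 * j)%N.
  by elim: j => //= j IH; rewrite IH; lia.
by rewrite /leaf_prog size_cat /= size_prefix size_sweep; lia.
Qed.

Lemma size_loop_prog body advance t c G : (forall t, size (body t) = G) ->
  size (loop_prog body advance t c) = (c.+1 * G + c * size advance)%N.
Proof.
move=> size_body; elim: c t => [|c IH] t /=; first by rewrite size_body; lia.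
by rewrite !size_cat IH size_body; lia.
Qed.

Lemma size_repeat (P : seq ins) c : size (flatten (nseq c P)) = (c * size P)%N.
Proof. by elim: c => //= c IH; rewrite size_cat IH; lia. Qed.

Lemma size_prog ls wt : size (prog ls wt) = prog_cost ls.
Proof.
elim: ls wt => [|nu ls IH] wt /=; first exact: size_leaf_prog.
rewrite size_cat (size_loop_prog _ _ _ (G := prog_cost ls)) //.
by rewrite size_repeat !size_row_update; lia.
Qed.

Lemma prog_cost_bound ls :
  (prog_cost ls + 2 * K <= (6 * K + 1) * \prod_(nu <- ls) (cnt nu).+1)%N.
Proof.
elim: ls => [|nu ls IH] /=; first by rewrite big_nil; lia.
by rewrite big_cons; nia.
Qed.

Lemma size_prog_bound :
  (size (prog (enum 'I_m) 1) <= 7 * K * \prod_(nu < m) (mult z nu).+1)%N.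
Proof.
have cnt_prod : (\prod_(nu <- enum 'I_m) (cnt nu).+1 <= \prod_(nu < m) (mult z nu).+1)%N.
  by rewrite big_enum /=; apply: leq_prod => nu _; rewrite ltnS cnt_le_mult.
have := prog_cost_bound (enum 'I_m); rewrite size_prog.
by move: cnt_prod; set Pc := (\prod_(nu <- _) _)%N; set Pm := (\prod_(nu < m) _)%N; nia.
Qed.

Variable A : 'M[F]_m.

Definition exec (P : seq ins) st := foldl (step A) st P.

Lemma exec_cat P1 P2 st : exec (P1 ++ P2) st = exec P2 (exec P1 st).
Proof. by rewrite /exec foldl_cat. Qed.

Lemma stepE st d o a1 a2 i : (i < nregs)%N -> (d < nregs)%N ->
  step A st (Instr (reg d) o a1 a2) (reg i) =
  if i == d then eval_op o (eval_operand A st a1) (eval_operand A st a2)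
  else st (reg i).
Proof.
move=> lt_i lt_d; rewrite /step /=.
by have -> : (reg i == reg d) = (i == d) by rewrite -val_eqE /= /reg !inordK.
Qed.

Ltac simp_if := repeat match goal with
  | |- context [if ?a == ?b then _ else _] =>
      first [ have -> : (a == b) = false by lia | have -> : (a == b) = true by lia ]
  end.

Lemma prefix_prog_spec j : (j <= n)%N -> forall st,
  (forall i, (i < 2 * K)%N -> exec (prefix_prog j) st (reg i) = st (reg i)) /\
  (forall l, (l <= j)%N ->
     exec (prefix_prog j) st (reg (2 * K + l)) = \prod_(i < l) st (reg (K + i))).
Proof.
rewrite /nregs; elim: j => [|j IH] le_jn st.
  split=> [i lt_i|l le_l]; rewrite /exec /= stepE /nregs; try lia; simp_if => //.
  have -> : l = 0%N by lia.
  by rewrite big_ord0 /= addr0.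
have [IH1 IH2] := IH (ltnW le_jn) st.
split=> [i lt_i|l le_l]; rewrite /exec /= foldl_rcons stepE /nregs; try lia; simp_if.
  exact: IH1.
have [->|ne_l] := eqVneq l j.+1.
  simp_if => /=; rewrite -/(exec (prefix_prog j) st) IH2 // IH1; last lia.
  by rewrite big_ord_recr.
have -> : (2 * K + l == 2 * K + j.+1) = false by lia.
by apply: IH2; lia.
Qed.

Lemma suffix_sweep_spec j : (j <= K)%N -> forall st,
  (forall l, (l < j)%N -> exec (suffix_sweep j) st (reg l) =
     st (reg l) + st (reg (2 * K + l)) *
       (st (reg (3 * K)) * \prod_(l.+1 <= i < j) st (reg (K + i)))) /\
  (forall i, (j <= i)%N -> (i < 3 * K)%N -> exec (suffix_sweep j) st (reg i) = st (reg i)).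
Proof.
elim: j => [|j IH] le_jK st; first by split => // l.
pose st3 := exec (sweep_step j) st.
have sweepE : exec (suffix_sweep j.+1) st = exec (suffix_sweep j) st3 by rewrite exec_cat.
have st3_other i : (i < 3 * K)%N -> i != j -> st3 (reg i) = st (reg i).
  by move=> lt_i ne_ij; rewrite /st3 /exec /= !stepE /nregs; try lia; simp_if.
have st3_out : st3 (reg j) = st (reg j) + st (reg (2 * K + j)) * st (reg (3 * K)).
  rewrite /st3 /exec /= !stepE /nregs; try lia; simp_if => /=.
  by rewrite !stepE /nregs; try lia; simp_if.
have st3_suffix : st3 (reg (3 * K)) = st (reg (3 * K)) * st (reg (K + j)).
  rewrite /st3 /exec /= !stepE /nregs; try lia; simp_if => /=.
  by rewrite !stepE /nregs; try lia; simp_if.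
have [IH1 IH2] := IH (ltnW le_jK) st3.
rewrite sweepE; split=> [l lt_l|i le_i lt_i]; last by rewrite IH2 ?st3_other //; lia.
have [lt_lj|lt_jl|->] := ltngtP l j; last first.
- by rewrite IH2 ?st3_out ?big_geq ?mulr1 //; lia.
- lia.
rewrite IH1 // st3_suffix !st3_other; try lia.
rewrite big_nat_recr //= [in RHS]mulrA [X in _ = _ + _ * X]mulrC -!mulrA.
congr (_ + _ * (_ * (_ * _))); apply: eq_big_nat => i /andP [le_i lt_i].
by rewrite st3_other //; lia.
Qed.

Definition cur (st : 'I_nregs -> F) : 'rV[F]_K := \row_(j < K) st (reg (K + j)).
Definition rowK (nu : 'I_m) : 'rV[F]_K := \row_(j < K) A nu (widen_ord hk j).
Definition prod_but (l : 'I_K) (c : 'rV[F]_K) : F := \prod_(j < n) c 0 (lift l j).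

Definition adds_to_outputs (P : seq ins) (G : 'I_K -> 'rV[F]_K -> F) := forall st,
  (forall l : 'I_K, exec P st (reg l) = st (reg l) + G l (cur st)) /\
  cur (exec P st) = cur st.

Definition translates (P : seq ins) (r : 'rV[F]_K) := forall st,
  (forall l : 'I_K, exec P st (reg l) = st (reg l)) /\ cur (exec P st) = cur st + r.

Lemma leaf_prog_spec wt : adds_to_outputs (leaf_prog wt) (fun l c => wt * prod_but l c).
Proof.
move=> st; have [pre_low pre_prod] := prefix_prog_spec (leqnn n) st.
pose st2 := step A (exec (prefix_prog n) st) (Instr (reg (3 * K)) SAdd (oC wt) (oC 0)).
have leafE : exec (leaf_prog wt) st = exec (suffix_sweep K) st2 by rewrite exec_cat.
have st2_other i : (i < 3 * K)%N -> st2 (reg i) = exec (prefix_prog n) st (reg i).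
  by move=> lt_i; rewrite /st2 stepE /nregs; try lia; simp_if.
have st2_wt : st2 (reg (3 * K)) = wt.
  by rewrite /st2 stepE /nregs; try lia; simp_if; rewrite /= addr0.
have [sweep_out sweep_keep] := suffix_sweep_spec (leqnn K) st2.
rewrite leafE; split=> [l|]; last first.
  apply/rowP => j; have lt_j := ltn_ord j.
  by rewrite !mxE sweep_keep ?st2_other ?pre_low //; lia.
have := ltn_ord l => lt_l.
rewrite sweep_out // st2_wt st2_other ?pre_low; try lia.
rewrite st2_other ?pre_prod; try lia.
rewrite /prod_but (eq_bigr (fun j => st (reg (K + lift l j)))) => [|j _]; last by rewrite mxE.
rewrite (prod_lift_split (fun i => st (reg (K + i)))) mulrCA.
congr (_ + _ * (_ * _)); apply: eq_big_nat => i /andP [le_i lt_i].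
by rewrite st2_other ?pre_low //; lia.
Qed.

Lemma row_update_reg o (h : F -> F) nu (js : seq 'I_K) st i :
  (forall x y, eval_op o x y = x + h y) -> (i < nregs)%N ->
  exec [seq Instr (reg (K + j)) o (oR (reg (K + j))) (oI nu (widen_ord hk j)) | j : 'I_K <- js]
    st (reg i)
  = st (reg i) + \sum_(j <- js | (K + j == i)%N) h (A nu (widen_ord hk j)).
Proof.
move=> opE lt_i; elim: js st => [|j js IH] st /=; first by rewrite big_nil addr0.
rewrite IH big_cons stepE //; last by rewrite /nregs; have := ltn_ord j; lia.
by have [->|_] := eqVneq i (K + j); rewrite /= ?opE ?addrA.
Qed.

Lemma row_update_spec o (h : F -> F) nu :
  (forall x y, eval_op o x y = x + h y) ->
  translates (row_update o nu) (\row_(j < K) h (A nu (widen_ord hk j))).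
Proof.
move=> opE st; split=> [l|].
  have lt_l := ltn_ord l.
  rewrite /row_update (row_update_reg (h := h)) //; last by rewrite /nregs; lia.
  by rewrite big1_seq ?addr0 // => j /andP [/eqP eq_jl _]; exfalso; lia.
apply/rowP => j; have lt_j := ltn_ord j; rewrite !mxE /row_update (row_update_reg (h := h)) //;
  last by rewrite /nregs; lia.
rewrite (eq_bigl (fun j' => j' == j)) => [|j']; last by rewrite /= eqn_add2l.
by rewrite big_enum_cond /= big_pred1_eq.
Qed.

Lemma repeat_spec P r c : translates P r -> translates (flatten (nseq c P)) (r *+ c).
Proof.
move=> P_r; elim: c => [|c IH] st /=; first by split => [l|]; rewrite ?mulr0n ?addr0.
rewrite exec_cat; have [P_out P_cur] := P_r st; have [IH_out IH_cur] := IH (exec P st).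
by split=> [l|]; rewrite ?IH_out ?P_out // IH_cur P_cur mulrS addrA.
Qed.

Lemma loop_prog_spec body advance r (G : nat -> 'I_K -> 'rV[F]_K -> F) :
  (forall t, adds_to_outputs (body t) (G t)) -> translates advance r -> forall c t st,
  (forall l : 'I_K, exec (loop_prog body advance t c) st (reg l) =
     st (reg l) + \sum_(i < c.+1) G (t + i)%N l (cur st + r *+ i)) /\
  cur (exec (loop_prog body advance t c) st) = cur st + r *+ c.
Proof.
move=> body_G adv_r; elim=> [|c IH] t st /=.
  have [b_out b_cur] := body_G t st; split=> [l|]; last by rewrite b_cur mulr0n addr0.
  by rewrite b_out big_ord1 addn0 mulr0n addr0.
rewrite !exec_cat; have [b_out b_cur] := body_G t st.
have [a_out a_cur] := adv_r (exec (body t) st).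
have [IH_out IH_cur] := IH t.+1 (exec advance (exec (body t) st)).
split=> [l|]; last by rewrite IH_cur a_cur b_cur mulrS addrA.
rewrite IH_out a_out b_out a_cur b_cur [in RHS]big_ord_recl addn0 mulr0n addr0 addrA.
by congr (_ + _); apply: eq_bigr => i _; rewrite lift0 addSnnS mulrS addrA.
Qed.

Lemma prog_spec ls wt :
  adds_to_outputs (prog ls wt) (fun l c => wt * grouped_Deltas rowK ls zs (prod_but l) c).
Proof.
elim: ls wt => [|nu ls IH] wt /=; first exact: leaf_prog_spec.
move=> st; rewrite exec_cat.
have add_r := row_update_spec (o := SAdd) (h := id) nu (fun x y => erefl).
have sub_r := row_update_spec (o := SSub) (h := -%R) nu (fun x y => erefl).
have [loop_out loop_cur] :=
  loop_prog_spec (fun t => IH (wt * wgt F (cnt nu) t)) add_r (cnt nu) 0 st.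
have [rep_out rep_cur] := repeat_spec (cnt nu) sub_r
  (exec (loop_prog (fun t => prog ls (wt * wgt F (cnt nu) t)) (row_update SAdd nu) 0
    (cnt nu)) st).
split=> [l|]; last first.
  rewrite rep_cur loop_cur; apply/rowP => j; rewrite !(mxE, mulmxnE) /=.
  by rewrite -addrA -mulrnDl subrr mul0rn addr0.
rewrite rep_out loop_out iter_Delta_expand mulr_sumr; congr (_ + _).
by apply: eq_bigr => i _; rewrite add0n mulrA.
Qed.

Lemma prog_correct (l : 'I_K) :
  run (prog (enum 'I_m) 1) A (reg l) = permanent (Bdiamond (Bmat hk A z) l).
Proof.
have [prog_out _] := prog_spec (enum 'I_m) 1 (fun _ => 0).
rewrite /run -/(exec _ _) prog_out add0r mul1r.
have -> : cur (fun _ => 0) = 0 by apply/rowP => j; rewrite !mxE.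
rewrite -Deltas_regroup ?enum_uniq // => [|x _]; last by rewrite mem_enum.
rewrite /zs -map_comp Deltas_expand ryser; apply: eq_bigr => x _; congr (_ * _).
rewrite add0r /prod_but; apply: eq_bigr => j _; rewrite summxE; apply: eq_bigr => i _.
by rewrite mulmxnE !mxE mulr_natl.
Qed.
End Program.

Theorem lemma1 :
  exists C : nat,
  forall (R : realType) (m n : nat) (hk : (n.+1 <= m)%N) (z : 'I_n.+1 -> 'I_m),
  exists (W : nat) (P : slp R[i] m W) (out : 'I_n.+1 -> 'I_W),
    [/\ (W <= C * n.+1)%N,
        (size P <= C * n.+1 * \prod_(nu < m) (mult z nu).+1)%N &
        forall (A : 'M[R[i]]_m) (l : 'I_n.+1),
          run P A (out l) = permanent (Bdiamond (Bmat hk A z) l)].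
Proof.
exists 7%N => R m n hk z.
exists (nregs n), (prog hk z (enum 'I_m) 1), (reg n); split.
- by rewrite /nregs; lia.
- exact: size_prog_bound.
- exact: prog_correct.
Qed.
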